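(* Consider simple tornado hashing, i.e. a random tornado tabulation hash function with $d$ derived characters in which $\tilde h_0\equiv0$. Let $M$ be a partial matching on $\Sigma^c$ and let $i\in\{1,\dots,d\}$. Conditioned on $M$ being $(i-1)$-independent, $M$ is an $i$-matching with probability $1/|\Sigma|^{|M|}$.
   Context: Let $\Sigma=\{0,\dots,2^k-1\}$, identified with $k$-bit strings, $\oplus$ bitwise xor. A simple tabulation hash function $g:\Sigma^b\to\Sigma$ is $g(x_1\cdots x_b)=T_1[x_1]\oplus\cdots\oplus T_b[x_b]$ with independent fully random tables $T_i:\Sigma\to\Sigma$. Simple tornado hashing uses mutually independent simple tabulation functions $\tilde h_i:\Sigma^{c+i-1}\to\Sigma$, $i=1,\dots,d$; the derived key of $x=x_1\cdots x_c$ is $\tilde x=\tilde x_1\cdots\tilde x_{c+d}$ with $\tilde x_i=x_i$ for $i\le c$ and $\tilde x_i=\tilde h_{i-c}(\tilde x_1\cdots\tilde x_{i-1})$ for $i>c$. A generalized key is a subset of $\{1,\dots,c+d\}\times\Sigma$ (pairs are position characters); a key $y\in\Sigma^{c+d}$ is identified with $\{(j,y_j)\}$. For a generalized key $z$, $z[\le j]=\{(l,a)\in z: l\le j\}$. A set of generalized keys is linearly independent if no nonempty subset of it has empty symmetric difference (i.e., no nonempty subset in which every position character occurs an even number of times). A partial matching $M$ on $\Sigma^c$ is a set of pairwise disjoint unordered pairs $\{x,y\}$ of distinct keys. $M$ is an $i$-matching if $\tilde x_{c+i}=\tilde y_{c+i}$ for every $\{x,y\}\in M$. $M$ is $j$-independent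 if the set $\{(\tilde x\triangle\tilde y)[\le c+j]:\{x,y\}\in M\}$ is linearly independent (where $\triangle$ is symmetric difference of position-character sets) and consists of $|M|$ distinct elements. *)

From mathcomp Require Import all_boot all_order all_algebra.
Set Implicit Arguments. Unset Strict Implicit. Unset Printing Implicit Defensive.

Section Tornado.
Variables (k c d : nat).

(* Alphabet Sigma = k-bit strings; xor is pointwise addb. *)
Definition Sig := {ffun 'I_k -> bool}.
Definition sig0 : Sig := [ffun => false].

Definition key := {ffun 'I_c -> Sig}.
Definition dkeyT := {ffun 'I_(c + d) -> Sig}.

(* The randomness: for the i-th (0-based) simple tabulation function,
   tables indexed by positions j; only j < c + i are used (the others are
   independent dummy tables and do not affect any probability). *)
Definition Tab := {ffun 'I_d -> {ffun 'I_(c + d) -> {ffun Sig -> Sig}}}.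

Definition tab (T : Tab) (n : nat) (j : 'I_(c + d)) : {ffun Sig -> Sig} :=
  if insub n is Some i then T i j else [ffun a => a].

(* derseq T x n = the first c + n characters of the derived key. *)
Fixpoint derseq (T : Tab) (x : key) (n : nat) : seq Sig :=
  match n with
  | 0 => [seq x j | j : 'I_c]
  | n'.+1 =>
      let s := derseq T x n' in
      rcons s [ffun b => \big[addb/false]_(j : 'I_(c + d) | j < c + n')
                           tab T n' j (nth sig0 s j) b]
  end.

Definition dkey (T : Tab) (x : key) : dkeyT :=
  [ffun l : 'I_(c + d) => nth sig0 (derseq T x d) l].

Definition gkey (y : dkeyT) : {set 'I_(c + d) * Sig} := [set p | y p.1 == p.2].

(* z[<= m] with 1-based positions = positions with 0-based index < m. *)
Definition trunc (z : {set 'I_(c + d) * Sig}) (m : nat) :=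
  [set p in z | p.1 < m].

Definition symdiff (Q : {set {set 'I_(c + d) * Sig}}) : {set 'I_(c + d) * Sig} :=
  [set p | odd #|[set z in Q | p \in z]|].

Definition lin_indep (S : {set {set 'I_(c + d) * Sig}}) : bool :=
  [forall Q : {set {set 'I_(c + d) * Sig}},
     (Q \subset S) ==> (Q != set0) ==> (symdiff Q != set0)].

Definition partial_matching (M : {set {set key}}) : Prop :=
  (forall e, e \in M -> #|e| = 2) /\
  (forall e e', e \in M -> e' \in M -> e != e' -> [disjoint e & e']).

Definition pdiff (T : Tab) (e : {set key}) (j : nat) :=
  trunc (symdiff [set gkey (dkey T x) | x in e]) (c + j).

Definition j_independent (T : Tab) (M : {set {set key}}) (j : nat) : bool :=
  lin_indep [set pdiff T e j | e in M] && (#|[set pdiff T e j | e in M]| == #|M|).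

(* i-matching (1 <= i <= d): derived character at 1-based position c+i
   (0-based index c+i-1) agrees on each pair. *)
Definition i_matching (T : Tab) (M : {set {set key}}) (i : nat) : bool :=
  [forall e in M, forall x in e, forall y in e,
    nth sig0 (derseq T x d) (c + i - 1) == nth sig0 (derseq T y d) (c + i - 1)].

Definition Pr (E : pred Tab) : rat := (#|E|%:R / #|Tab|%:R)%R.

End Tornado.

(* Fix all the randomness except the tables of the i-th tabulation function.
   The first c + i - 1 characters of every derived key, hence the symmetric
   differences D_e of x~ and y~ truncated to these positions, for the pairs
   e = {x, y} of M, do not depend on these tables, and e agrees on character
   c + i iff the xor of the table entries indexed by the position characters
   of D_e vanishes.  Over F_2 this is a homogeneous linear system A X = 0,
   where X encodes the tables as a matrix with one row per position character
   and one column per bit, and A is the incidence matrix of the D_e.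
   (i-1)-independence makes A row-free with |M| rows, so the solutions form a
   fraction 2^(-k|M|) = |Sigma|^(-|M|) of all tables; summing over the
   remaining randomness gives the claim. *)

From mathcomp Require Import all_boot all_order all_algebra.
From mathcomp Require Import ring.
Set Implicit Arguments. Unset Strict Implicit. Unset Printing Implicit Defensive.
Import GRing.Theory Num.Theory.

Lemma forall_in_imset (aT rT : finType) (f : aT -> rT) (D : {set aT}) (P : pred rT) :
  [forall y in f @: D, P y] = [forall x in D, P (f x)].
Proof.
apply/forall_inP/forall_inP => [PfD x xD | PD y /imsetP [x xD ->]]; last exact: PD.
by apply: PfD; apply: imset_f.
Qed.

Lemma forall_in_set2_eq (T : finType) (rT : eqType) (f : T -> rT) (x y : T) :
  [forall x' in [set x; y], forall y' in [set x; y], f x' == f y'] = (f x == f y).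
Proof.
apply/forall_inP/eqP => [fxy | fxy _ /set2P [] -> ].
- by apply/eqP; move/forall_inP: (fxy x (set21 x y)); apply; apply: set22.
- by apply/forall_inP => _ /set2P [] ->; rewrite ?fxy.
- by apply/forall_inP => _ /set2P [] ->; rewrite ?fxy.
Qed.

Lemma bigxor_graph_diff (I A : finType) (P : pred I) (f : I -> A -> bool) (s t : I -> A) :
  \big[addb/false]_(j | P j) f j (s j) (+) \big[addb/false]_(j | P j) f j (t j) =
  \big[addb/false]_(p | P p.1 && ((s p.1 == p.2) != (t p.1 == p.2))) f p.1 p.2.
Proof.
rewrite -big_split -(pair_big_dep P (fun j a => (s j == a) != (t j == a))).
apply: eq_bigr => j _ /=.
have [<-|st] := eqVneq (s j) (t j).
  by rewrite addbb big_pred0 // => a; rewrite eqxx.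
rewrite (eq_bigl (mem [set s j; t j])) => [|a]; last first.
  rewrite !inE ![_ == a]eq_sym.
  by have [->|] := eqVneq a (s j); [rewrite (negPf st) | case: (a == t j)].
by rewrite big_setU1 ?big_set1 // inE.
Qed.

Section KernelCount.
Variables (F : finFieldType) (m n p : nat) (A : 'M[F]_(m, n)).
Hypothesis rfA : row_free A.
Local Open Scope ring_scope.

Lemma card_fiber_mulmx (W : 'M[F]_(m, p)) :
  #|[set X | A *m X == W]| = #|[set X : 'M_(n, p) | A *m X == 0]|.
Proof.
have [B AB] := row_freeP rfA.
rewrite -[RHS](card_imset _ (addIr (B *m W))) (can2_imset_pre _ (addrK _) (subrK _)).
by apply: eq_card => X; rewrite !inE mulmxBr mulmxA AB mul1mx subr_eq0.
Qed.

Lemma card_ker_mulmx :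
  (#|[set X : 'M_(n, p) | A *m X == 0%R]| * #|{: 'M[F]_(m, p)}| = #|{: 'M[F]_(n, p)}|)%N.
Proof.
rewrite mulnC -sum_nat_const -[RHS]sum1_card (partition_big (mulmx A) xpredT) //=.
by apply: eq_bigr => W _; rewrite -(card_fiber_mulmx W) sum1dep_card.
Qed.

End KernelCount.

Lemma divf_scaled_ratio (F : fieldType) (a s n : F) :
  (a != 0 -> n != 0 -> a / n / (a * s / n) = 1 / s)%R.
Proof.
move=> a0 n0; have [->|s0] := eqVneq s 0%R; first by rewrite !(mulr0, mul0r, invr0).
by field; rewrite a0 n0 s0.
Qed.

Section F2.
Local Open Scope ring_scope.

Definition F2_of_bool (b : bool) : 'F_2 := b%:R.

Lemma F2_of_bool_addb : {morph F2_of_bool : a b / a (+) b >-> a + b}.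
Proof. by do 2 case; apply/val_inj. Qed.

Lemma F2_of_bool_eq0 b : (F2_of_bool b == 0) = ~~ b.
Proof. by case: b; rewrite ?oner_eq0 ?eqxx. Qed.

Lemma F2_of_boolK (x : 'F_2) : F2_of_bool (x != 0) = x.
Proof. by case: x => [[|[|]]] //= ?; apply/val_inj. Qed.

Lemma F2_of_bool_andb : {morph F2_of_bool : a b / a && b >-> a * b}.
Proof. by do 2 case; rewrite /= ?mulr0 ?mulr1. Qed.

Lemma F2_natr_odd n : n%:R = F2_of_bool (odd n).
Proof. by rewrite -(Fp_nat_mod (isT : prime 2)) modn2. Qed.

Lemma F2_sum_bool (I : finType) (B : pred I) :
  \sum_i F2_of_bool (B i) = F2_of_bool (odd #|B|).
Proof.
rewrite -F2_natr_odd -sum1_card natr_sum [RHS]big_mkcond.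
by apply: eq_bigr => i _; rewrite unfold_in; case: (B i).
Qed.

End F2.

Section IncidenceMatrix.
Variables (k c d : nat).
Local Notation pchar := ('I_(c + d) * Sig k)%type.
Local Open Scope ring_scope.

Definition incidence_mx (V : {set {set pchar}}) : 'M['F_2]_(#|V|, #|{: pchar}|) :=
  \matrix_(r < #|V|, q < #|{: pchar}|)
    F2_of_bool ((enum_val q : pchar) \in (enum_val r : {set pchar})).

Lemma incidence_mx_rowE (V : {set {set pchar}}) (u : 'rV_#|V|) q :
  (u *m incidence_mx V) 0 q =
  F2_of_bool ((enum_val q : pchar) \in symdiff (enum_val @: [set r | u 0 r != 0])).
Proof.
rewrite !mxE inE.
under eq_bigr => r _ do rewrite mxE -[u 0 r]F2_of_boolK -F2_of_bool_andb.
rewrite F2_sum_bool; congr (F2_of_bool (odd _)).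
rewrite -(card_imset _ (@enum_val_inj _ (mem V))); apply: eq_card => z; rewrite !inE.
apply/imsetP/andP => [[r /andP [ur pr] ->] | [/imsetP [r ur ->] pr]].
  by split=> //; apply: imset_f; rewrite inE.
by exists r => //; rewrite inE in ur; rewrite unfold_in /= ur.
Qed.

Lemma lin_indep_row_free (V : {set {set pchar}}) : lin_indep V -> row_free (incidence_mx V).
Proof.
move=> /forallP indepV; rewrite -kermx_eq0; apply/rowV0P => u /sub_kermxP uA.
apply/rowP => r; rewrite mxE; apply: contraTeq isT => ur.
set Q := enum_val @: [set r | u 0 r != 0].
have QV : Q \subset V by apply/subsetP => _ /imsetP [r' _ ->]; apply: enum_valP.
have Q0 : Q != set0 by apply/set0Pn; exists (enum_val r); apply: imset_f; rewrite inE.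
have symdiffQ : symdiff Q = set0.
  apply/setP => p; rewrite in_set0; apply/negbTE.
  by rewrite -F2_of_bool_eq0 -(enum_rankK p) /Q -incidence_mx_rowE uA mxE.
by move: (indepV Q); rewrite QV Q0 symdiffQ eqxx.
Qed.

End IncidenceMatrix.

Section SimpleTornado.
Variables (k c d : nat).
Local Notation pchar := ('I_(c + d) * Sig k)%type.
Local Notation table := {ffun 'I_(c + d) -> {ffun Sig k -> Sig k}}.
Implicit Types (T : Tab k c d) (i : 'I_d) (U : table) (x y : key k c) (M : {set {set key k c}}).

Lemma size_derseq T x n : size (derseq T x n) = c + n.
Proof.
elim: n => [|n IH] /=; first by rewrite size_map size_enum_ord addn0.
by rewrite size_rcons IH addnS.
Qed.

Lemma nth_derseq_le T x n m l : n <= m -> l < c + n ->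
  nth (sig0 k) (derseq T x m) l = nth (sig0 k) (derseq T x n) l.
Proof.
move=> le_nm lt_ln; elim: m le_nm => [|m IH]; first by rewrite leqn0 => /eqP ->.
rewrite leq_eqVlt ltnS => /predU1P [-> // | le_nm].
by rewrite /= nth_rcons size_derseq (leq_trans lt_ln) ?leq_add2l // IH.
Qed.

Lemma nth_derseq_key T x n (l : 'I_c) : nth (sig0 k) (derseq T x n) l = x l.
Proof.
by rewrite (@nth_derseq_le T x 0) ?addn0 //= (nth_map l) ?size_enum_ord ?nth_ord_enum.
Qed.

Lemma gkey_dkey_inj T : injective (fun x => gkey (dkey T x)).
Proof.
move=> x y /setP E; apply/ffunP => l; pose l' := widen_ord (leq_addr d c) l.
have := E (l', dkey T x l'); rewrite !inE eqxx /= !ffunE /= !nth_derseq_key.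
by move=> /esym/eqP.
Qed.

Definition set_tab T (i : 'I_d) U : Tab k c d := [ffun j => if j == i then U else T j].

Lemma derseq_set_tab T i U x n : n <= i -> derseq (set_tab T i U) x n = derseq T x n.
Proof.
elim: n => [//|n IH] lt_ni /=; rewrite IH ?(ltnW lt_ni) //.
congr rcons; apply/ffunP => b; rewrite !ffunE; apply: eq_bigr => j _.
rewrite /tab; case: insubP => // i' _ val_i'; rewrite ffunE.
by case: eqP => // eq_i'; move: lt_ni; rewrite -val_i' eq_i' ltnn.
Qed.

Lemma derived_char_set_tab T i U x :
  nth (sig0 k) (derseq (set_tab T i U) x d) (c + i) =
  [ffun b => \big[addb/false]_(j : 'I_(c + d) | j < c + i)
                U j (nth (sig0 k) (derseq T x i) j) b].
Proof.
rewrite (@nth_derseq_le _ _ i.+1) ?ltn_ord ?addnS ?ltnS //=.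
rewrite nth_rcons size_derseq ltnn eqxx derseq_set_tab //.
apply/ffunP => b; rewrite !ffunE; apply: eq_bigr => j _.
by rewrite /tab valK ffunE eqxx.
Qed.

Lemma in_symdiff_set2 (a b : {set pchar}) p :
  a != b -> (p \in symdiff [set a; b]) = (p \in a) (+) (p \in b).
Proof.
move=> ab; rewrite inE -sum1dep_card big_mkcondr big_setU1 ?inE //= big_set1 oddD.
by case: (p \in a); case: (p \in b).
Qed.

Lemma pdiff_pair T x y j : x != y -> j <= d ->
  pdiff T [set x; y] j =
  [set p : pchar | (p.1 < c + j) &&
     ((nth (sig0 k) (derseq T x j) p.1 == p.2) != (nth (sig0 k) (derseq T y j) p.1 == p.2))].
Proof.
move=> xy le_jd; apply/setP => p; rewrite /pdiff /trunc imsetU1 imset_set1 [in LHS]inE.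
rewrite in_symdiff_set2 ?(inj_eq (@gkey_dkey_inj T)) // !inE !ffunE.
case: ltnP => lt_p; rewrite ?andbF //= andbT negb_eqb.
by rewrite !(nth_derseq_le _ _ le_jd lt_p).
Qed.

Definition tabulate U (Z : {set pchar}) : Sig k :=
  [ffun b => \big[addb/false]_(p in Z) U p.1 p.2 b].

Lemma eq_derived_char_set_tab T i U x y : x != y ->
  (nth (sig0 k) (derseq (set_tab T i U) x d) (c + i) ==
   nth (sig0 k) (derseq (set_tab T i U) y d) (c + i)) =
  (tabulate U (pdiff T [set x; y] i) == sig0 k).
Proof.
move=> xy; rewrite !derived_char_set_tab pdiff_pair ?(ltnW (ltn_ord i)) //.
have xor_graph b := bigxor_graph_diff (fun j : 'I_(c + d) => j < c + i) (fun j a => U j a b)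
  (fun j => nth (sig0 k) (derseq T x i) j) (fun j => nth (sig0 k) (derseq T y i) j).
apply/eqP/eqP => /ffunP E; apply/ffunP => b; move: (E b).
all: rewrite !ffunE (eq_bigl _ _ (in_set _)) -xor_graph.
  by move=> ->; rewrite addbb.
by move/eqP; rewrite eqbF_neg negb_add => /eqP.
Qed.

Lemma i_matching_set_tabE T i U M : partial_matching M ->
  i_matching (set_tab T i U) M i.+1 = [forall e in M, tabulate U (pdiff T e i) == sig0 k].
Proof.
case=> pairM _; rewrite /i_matching addnS subn1 /=; apply: eq_forallb_in => e eM.
have /eqP/cards2P [x [y [xy ->]]] := pairM e eM.
rewrite (forall_in_set2_eq (fun z => nth (sig0 k) (derseq (set_tab T i U) z d) (c + i))).
exact: eq_derived_char_set_tab.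
Qed.

Definition table_mx U : 'M['F_2]_(#|{: pchar}|, k) :=
  \matrix_(q, b) F2_of_bool (U (enum_val q : pchar).1 (enum_val q : pchar).2 b).

Definition mx_table (X : 'M['F_2]_(#|{: pchar}|, k)) : table :=
  [ffun j => [ffun a => [ffun b => X (enum_rank (j, a)) b != 0%R]]].

Lemma table_mxK : cancel table_mx mx_table.
Proof.
move=> U; do 3 apply/ffunP => ?.
by rewrite !ffunE mxE enum_rankK F2_of_bool_eq0 negbK.
Qed.

Lemma mx_tableK : cancel mx_table table_mx.
Proof.
by move=> X; apply/matrixP => q b; rewrite mxE !ffunE -surjective_pairing enum_valK F2_of_boolK.
Qed.

Lemma incidence_mulmx_table (V : {set {set pchar}}) U r b :
  (incidence_mx V *m table_mx U)%R r b = F2_of_bool (tabulate U (enum_val r) b).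
Proof.
rewrite mxE ffunE (big_morph _ F2_of_bool_addb (erefl : F2_of_bool false = 0%R)).
transitivity (\sum_(q < #|{: pchar}|) F2_of_bool
    (((enum_val q : pchar) \in enum_val r) && U (enum_val q).1 (enum_val q).2 b))%R.
  by apply: eq_bigr => q _; rewrite !mxE F2_of_bool_andb.
rewrite -(big_enum_val (fun p : pchar => F2_of_bool ((p \in enum_val r) && U p.1 p.2 b))).
rewrite big_mkcond [RHS]big_mkcond; apply: eq_bigr => p _ /=.
by case: (p \in enum_val r).
Qed.

Lemma incidence_mulmx_table_eq0 (V : {set {set pchar}}) U :
  (incidence_mx V *m table_mx U == 0)%R = [forall Z in V, tabulate U Z == sig0 k].
Proof.
apply/eqP/forall_inP => [/matrixP VU0 Z VZ | V0].
  apply/eqP/ffunP => b; move/eqP: (VU0 (enum_rank_in VZ Z) b).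
  by rewrite incidence_mulmx_table enum_rankK_in // !mxE !ffunE F2_of_bool_eq0 => /negbTE.
apply/matrixP => r b; rewrite incidence_mulmx_table mxE.
by move/eqP/ffunP: (V0 _ (enum_valP r)) => /(_ b); rewrite !ffunE => ->.
Qed.

Lemma table_mx_bij : bijective table_mx.
Proof. exact: Bijective table_mxK mx_tableK. Qed.

Lemma card_matching_tables T i M : partial_matching M -> j_independent T M i ->
  #|[set U | i_matching (set_tab T i U) M i.+1]| * #|Sig k| ^ #|M| = #|{: table}|.
Proof.
move=> PM /andP [indepV /eqP cardV].
have -> : [set U | i_matching (set_tab T i U) M i.+1] =
          table_mx @^-1: [set X | (incidence_mx [set pdiff T e i | e in M] *m X == 0)%R].
  apply/setP => U; rewrite !inE i_matching_set_tabE //.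
  by rewrite incidence_mulmx_table_eq0 forall_in_imset.
rewrite on_card_preimset; last exact: onW_bij table_mx_bij.
rewrite [RHS](bij_eq_card table_mx_bij) -(card_ker_mulmx _ (lin_indep_row_free indepV)).
congr (_ * _).
by rewrite card_mx card_Fp // card_ffun card_bool card_ord -cardV mulnC expnM.
Qed.

Lemma sum_card_set_tab i (P : pred (Tab k c d)) :
  \sum_T #|[set U | P (set_tab T i U)]| = #|P| * #|{: table}|.
Proof.
pose swap (TU : Tab k c d * table) := (set_tab TU.1 i TU.2, TU.1 i).
have swapK : involutive swap.
  case=> T U; rewrite /swap /= ffunE eqxx; congr pair.
  by apply/ffunP => j; rewrite !ffunE; case: eqP => // ->.
transitivity #|swap @^-1: [set TU | P TU.1]|.
  under eq_bigr do rewrite -sum1dep_card.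
  by rewrite pair_big_dep sum1dep_card; apply: eq_card => TU; rewrite !inE.
rewrite on_card_preimset; last exact: onW_bij (inv_bij swapK).
by rewrite -cardsT -(cardsE P) -cardsX; apply: eq_card => TU; rewrite !inE andbT.
Qed.

Lemma j_independent_set_tab T i U M : partial_matching M ->
  j_independent (set_tab T i U) M i = j_independent T M i.
Proof.
case=> pairM _; rewrite /j_independent.
suff -> : [set pdiff (set_tab T i U) e i | e in M] = [set pdiff T e i | e in M] by [].
apply: eq_in_imset => e eM; have /eqP/cards2P [x [y [xy ->]]] := pairM e eM.
by rewrite !pdiff_pair ?(ltnW (ltn_ord i)) // !derseq_set_tab.
Qed.

Lemma card_matching_independent i M : partial_matching M ->
  #|[pred T : Tab k c d | j_independent T M i && i_matching T M i.+1]| * #|Sig k| ^ #|M| =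
  #|[pred T : Tab k c d | j_independent T M i]|.
Proof.
move=> PM; have table_gt0 : 0 < #|{: table}|.
  by apply/card_gt0P; exists [ffun => [ffun a => a]].
apply/eqP; rewrite -(eqn_pmul2r table_gt0) mulnAC -!(sum_card_set_tab i) big_distrl /=.
apply/eqP/eq_bigr => T _.
have indep_set_tab U : j_independent (set_tab T i U) M i = j_independent T M i.
  exact: j_independent_set_tab.
have [indepT | /negbTE depT] := boolP (j_independent T M i).
  transitivity #|{: table}|; last by apply: eq_card => U; rewrite !inE indep_set_tab indepT.
  rewrite -(card_matching_tables PM indepT); congr (_ * _).
  by apply: eq_card => U; rewrite !inE indep_set_tab indepT.
by rewrite [X in X * _]eq_card0 ?[RHS]eq_card0 // => U; rewrite !inE indep_set_tab depT.
Qed.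

End SimpleTornado.

Theorem lemma3p1 (k c d : nat) (M : {set {set key k c}}) (i : nat) :
  partial_matching M -> 1 <= i <= d ->
  (0 < Pr (fun T : Tab k c d => j_independent T M i.-1))%R ->
  (Pr (fun T : Tab k c d => j_independent T M i.-1 && i_matching T M i)
     / Pr (fun T : Tab k c d => j_independent T M i.-1))%R
  = (1 / (#|Sig k| ^ #|M|)%:R)%R.
Proof.
move=> PM /andP [i_gt0 le_id] Pr_gt0.
have lt_id : i.-1 < d by rewrite prednK.
have count := card_matching_independent (Ordinal lt_id) PM; rewrite /= prednK // in count.
rewrite /Pr -count natrM in Pr_gt0 *.
move/lt0r_neq0: Pr_gt0; rewrite !mulf_eq0 invr_eq0 !negb_or => /andP [/andP [a0 _] N0].
exact: divf_scaled_ratio.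
Qed.
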